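(* Let $G=(V,E,w)$ be an $n$-vertex directed graph with real edge weights, let $h>0$ be an integer and $\tau\ge 2n^2$ an integer. The procedure $\textsc{DetPreprocessing}(G,\tau,h)$ described below can be implemented to run in $O(n^3 h)$ time.
   Context: Let $i_h=\lceil \log_{3/2} h\rceil$ and $h_i=(3/2)^i$ for $i=0,\dots,i_h$. A path is $h'$-hop-restricted if it has at most $h'$ edges. The procedure $\textsc{DetPreprocessing}(G,\tau,h)$: initialize $C\gets\emptyset$, $\textsc{Congestion}(v)\gets 0$ for all $v\in V$, and $\pi^i_{s,t}\gets\bot$ (the empty path of weight $\infty$) for all $s,t\in V$, $i\in[0,i_h]$. Then process every vertex $s\in V$ exactly once as a root, in an arbitrary order; for each root $s$ and each $i\in[0,i_h]$ in turn: (1) compute, by $h_i$ rounds of Bellman-Ford from $s$ in the induced graph $G[V\setminus C]$, paths $\pi^i_{s,t}$ for all $t\in V$ that are shortest among $h_i$-hop-restricted paths from $s$ to $t$ in $G[V\setminus C]$; (2) for every $t\in V$ and every vertex $u$ on $\pi^i_{s,t}$, increase $\textsc{Congestion}(u)$ by $\lceil n/h_i\rceil$; (3) set $C\gets\{v\in V:\textsc{Congestion}(v)>\tau/2\}$. *)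

From HB Require Import structures.
From mathcomp Require Import all_boot all_order all_algebra.
Set Implicit Arguments. Unset Strict Implicit. Unset Printing Implicit Defensive.
Import Order.TTheory GRing.Theory Num.Theory.

(*    w u v = Some x means the edge u -> v exists with weight x, and None    *)
(*    means there is no edge.  R is any real (ordered) domain, e.g. the reals.*)
(*  - A path (walk) is its non-empty vertex list [:: v0; ...; vk]; it has    *)
(*    k edges ("hops").  The empty path ⊥ of weight ∞ is None.               *)
(*  - h_i = (3/2)^i ; "h_i-hop-restricted" = at most floor(h_i) edges,       *)
(*    floor((3/2)^i) = 3^i %/ 2^i ; ceil(n/h_i) = ceil(n 2^i / 3^i).         *)
(*  - i_h = ceil(log_{3/2} h) = least i with (3/2)^i >= h, i.e.             *)
(*    h * 2^i <= 3^i (such an i <= h always exists).                        *)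

Definition hop (i : nat) : nat := 3 ^ i %/ 2 ^ i.
Definition cinc (n i : nat) : nat := (n * 2 ^ i + 3 ^ i - 1) %/ 3 ^ i.
Definition ih (h : nat) : nat := find (fun i => h * 2 ^ i <= 3 ^ i) (iota 0 h.+1).

Record dp_state (n : nat) := DPState {
  dpC : {set 'I_n};
  dpCong : 'I_n -> nat;
  dpPi : 'I_n -> nat -> 'I_n -> option (seq 'I_n) }.

Section Spec.
Variables (R : realDomainType) (n : nat) (w : 'I_n -> 'I_n -> option R).
Local Open Scope ring_scope.

Fixpoint walk_ok (u : 'I_n) (p : seq 'I_n) : bool :=
  if p is v :: p' then (w u v != None) && walk_ok v p' else true.

Fixpoint walk_weight (u : 'I_n) (p : seq 'I_n) : R :=
  if p is v :: p' then odflt 0 (w u v) + walk_weight v p' else 0.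

Definition is_hpath (A : {set 'I_n}) (k : nat) (s t : 'I_n) (q : seq 'I_n) : bool :=
  if q is x :: p then
    [&& x == s, last x p == t, all (fun v => v \in A) q, walk_ok x p & (size p <= k)%N]
  else false.

Definition pweight (q : seq 'I_n) : R :=
  if q is x :: p then walk_weight x p else 0.

Definition shortest_hpath (A : {set 'I_n}) (k : nat) (s t : 'I_n)
    (po : option (seq 'I_n)) : Prop :=
  match po with
  | None => forall q, ~~ is_hpath A k s t q
  | Some q => is_hpath A k s t q /\
              forall q', is_hpath A k s t q' -> pweight q <= pweight q'
  end.

Variables (tau h : nat).

(* steps (2) and (3) for root s and index i, given the paths P t = pi^i_{s,t} *)
Definition dp_step (st : dp_state n) (s : 'I_n) (i : nat)
    (P : 'I_n -> option (seq 'I_n)) : dp_state n :=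
  let cong' := fun u => (dpCong st u + cinc n i *
                 #|[set t | if P t is Some q then u \in q else false]|)%N in
  @DPState n [set v | (tau < 2 * cong' v)%N] cong'
    (fun s' i' t => if (s' == s) && (i' == i) then P t else dpPi st s' i' t).

Inductive dp_run : dp_state n -> seq ('I_n * nat) -> dp_state n -> Prop :=
| dp_run_nil st : dp_run st [::] st
| dp_run_cons st s i P rest st' :
    (forall t, shortest_hpath (~: dpC st) (hop i) s t (P t)) ->
    dp_run (dp_step st s i P) rest st' ->
    dp_run st ((s, i) :: rest) st'.

Definition dp_init : dp_state n :=
  @DPState n set0 (fun _ => 0%N) (fun _ _ _ => None).

Definition dp_schedule (ord : seq 'I_n) : seq ('I_n * nat) :=
  [seq (s, i) | s <- ord, i <- iota 0 (ih h).+1].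

(* out is a possible outcome of DetPreprocessing(G, tau, h): every vertex is
   processed once as a root, in some order, and ties among shortest paths
   are broken arbitrarily. *)
Definition DetPreprocessing_outcome (out : dp_state n) : Prop :=
  exists ord, perm_eq ord (enum 'I_n) /\ dp_run dp_init (dp_schedule ord) out.

End Spec.

(* A computation of type M A returns a value and a number of elementary
   steps.  Every iteration of every loop (mfold, recursion) costs one tick;
   loop bodies otherwise only perform O(1) primitive operations (array
   read/write, arithmetic and comparisons on words and on weights). *)

Definition M (A : Type) := (A * nat)%type.
Definition mret {A} (a : A) : M A := (a, 0%N).
Definition mbind {A B} (m : M A) (f : A -> M B) : M B :=
  let: (a, c) := m in let: (b, d) := f a in (b, (c + d)%N).
Definition tick {A} (m : M A) : M A := (m.1, m.2.+1).
Fixpoint mfold {T S} (f : T -> S -> M S) (xs : seq T) (s : S) : M S :=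
  if xs is x :: xs' then tick (mbind (f x s) (mfold f xs')) else mret s.

Section Impl.
Variables (R : realDomainType) (n : nat) (w : 'I_n -> 'I_n -> option R).
Variables (tau h : nat).
Local Open Scope ring_scope.

Definition upd {A} (f : 'I_n -> A) (i : 'I_n) (v : A) : 'I_n -> A :=
  fun j => if j == i then v else f j.

(* allocating/initialising an array of size n costs n steps *)
Definition init_arr {A} (f : 'I_n -> A) : M ('I_n -> A) :=
  mbind (mfold (fun _ u => mret u) (enum 'I_n) tt) (fun _ => mret f).

Definition lt_opt (a : R) (b : option R) : bool :=
  if b is Some b' then a < b' else true.

Definition relax_v (C : 'I_n -> bool) (d : 'I_n -> option R) (v : 'I_n)
  : M (option R * option 'I_n) :=
  mfold (fun u (acc : option R * option 'I_n) =>
     mret (match d u, w u v with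
           | Some a, Some b =>
               if ~~ C u && ~~ C v && lt_opt (a + b) acc.1
               then (Some (a + b), Some u) else acc
           | _, _ => acc end))
   (enum 'I_n) (d v, None).

Definition bf_round (C : 'I_n -> bool) (d : 'I_n -> option R)
  : M (('I_n -> option R) * ('I_n -> option 'I_n)) :=
  mfold (fun v (acc : ('I_n -> option R) * ('I_n -> option 'I_n)) =>
           mbind (relax_v C d v) (fun r => mret (upd acc.1 v r.1, upd acc.2 v r.2)))
        (enum 'I_n) (d, fun _ => None).

Definition bf (C : 'I_n -> bool) (s : 'I_n) (k : nat)
  : M (('I_n -> option R) * (nat -> 'I_n -> option 'I_n)) :=
  mbind (init_arr (fun v => if (v == s) && ~~ C s then Some 0 else None)) (fun d0 =>
  mfold (fun r (acc : ('I_n -> option R) * (nat -> 'I_n -> option 'I_n)) =>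
     mbind (bf_round C acc.1) (fun res =>
       mret (res.1, fun r' => if r' == r then res.2 else acc.2 r')))
   (iota 1 k) (d0, fun _ _ => None)).

Fixpoint recon (par : nat -> 'I_n -> option 'I_n) (r : nat) (v : 'I_n)
    (acc : seq 'I_n) : M (seq 'I_n) :=
  if r is r'.+1 then
    tick (if par r v is Some u then recon par r' u (u :: acc)
          else recon par r' v acc)
  else mret acc.

Definition bf_paths (C : 'I_n -> bool) (s : 'I_n) (k : nat)
  : M ('I_n -> option (seq 'I_n)) :=
  mbind (bf C s k) (fun res =>
    mfold (fun t (P : 'I_n -> option (seq 'I_n)) =>
      if res.1 t is Some _ then
        mbind (recon res.2 k t [:: t]) (fun q => mret (upd P t (Some q)))
      else mret (upd P t None))
    (enum 'I_n) (fun _ => None)).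

(* step (2), each vertex of a path counted once (time-stamp array) *)
Definition cong_update (inc : nat) (P : 'I_n -> option (seq 'I_n))
    (cong : 'I_n -> nat) : M ('I_n -> nat) :=
  mbind (init_arr (fun _ : 'I_n => @None 'I_n)) (fun stamp0 =>
  mbind (mfold (fun t (acc : ('I_n -> nat) * ('I_n -> option 'I_n)) =>
     if P t is Some q then
       mfold (fun u (acc' : ('I_n -> nat) * ('I_n -> option 'I_n)) =>
           if acc'.2 u == Some t then mret acc'
           else mret (upd acc'.1 u (acc'.1 u + inc)%N, upd acc'.2 u (Some t)))
         q acc
     else mret acc) (enum 'I_n) (cong, stamp0))
  (fun r => mret r.1)).

Definition C_update (cong : 'I_n -> nat) : M ('I_n -> bool) :=
  mfold (fun v (C : 'I_n -> bool) => mret (upd C v (tau < 2 * cong v)%N))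
        (enum 'I_n) (fun _ => false).

(* computes i_h, maintaining p2 = 2^i and p3 = 3^i *)
Fixpoint find_ih (fuel i p2 p3 : nat) : M nat :=
  tick (if (h * p2 <= p3)%N then mret i
        else if fuel is f.+1 then find_ih f i.+1 (p2 * 2) (p3 * 3) else mret i).

Definition impl_state :=
  (('I_n -> bool) * ('I_n -> nat) * ('I_n -> nat -> 'I_n -> option (seq 'I_n)))%type.

(* root s, index i, with p2 = 2^i, p3 = 3^i *)
Definition process (s : 'I_n) (i p2 p3 : nat) (st : impl_state) : M impl_state :=
  let: (C, cong, pi) := st in
  let k := (p3 %/ p2)%N in
  let inc := ((n * p2 + p3 - 1) %/ p3)%N in
  mbind (bf_paths C s k) (fun P =>
  mbind (cong_update inc P cong) (fun cong' =>
  mbind (C_update cong') (fun C' =>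
  mret (C', cong', fun s' i' => if (s' == s) && (i' == i) then P else pi s' i')))).

Definition process_root (ihv : nat) (s : 'I_n) (st : impl_state) : M impl_state :=
  mbind (mfold (fun i (acc : impl_state * nat * nat) =>
            let: (st', p2, p3) := acc in
            mbind (process s i p2 p3 st') (fun st'' => mret (st'', (p2 * 2)%N, (p3 * 3)%N)))
         (iota 0 ihv.+1) (st, 1%N, 1%N)) (fun acc => mret acc.1.1).

Definition DetPre_impl : M impl_state :=
  mbind (find_ih h 0 1 1) (fun ihv =>
  mbind (init_arr (fun _ : 'I_n => false)) (fun C0 =>
  mbind (init_arr (fun _ : 'I_n => 0%N)) (fun cong0 =>
  (* initialisation pi^i_{s,t} <- ⊥ for all s, t and i in [0, i_h] *)
  mbind (mfold (fun _ u => mfold (fun _ u' => mfold (fun _ u'' => mret u'')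
            (enum 'I_n) u') (iota 0 ihv.+1) u) (enum 'I_n) tt) (fun _ =>
  mfold (process_root ihv) (enum 'I_n) (C0, cong0, fun _ _ _ => None))))).

End Impl.

Definition impl_outcome (n : nat) (st : impl_state n) : dp_state n :=
  let: (C, cong, pi) := st in @DPState n [set v | C v] cong pi.

(* Correctness: one Bellman-Ford round relaxes every edge into every vertex, so
   by induction on r the distance array after r rounds holds the least weight of
   an r-hop path from s in G[V \ C], and following the parent pointers stored
   for rounds r, r - 1, ..., 1 rebuilds such a path.  The time stamps make step
   (2) count a vertex once per path, as in the specification.
   Cost: with k = floor(h_i), Bellman-Ford, path reconstruction and the
   congestion update take O(n^2 (k + 1)) steps, so a root costs
   O(n^2 sum_(i <= i_h) (h_i + 1)).  As floor(h_i) 2^i <= 3^i the sum of the h_i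
   is at most 3 h_(i_h), and minimality of i_h gives h_(i_h) < 3h/2; hence a
   root costs O(n^2 h) and the n roots O(n^3 h). *)

From mathcomp Require Import all_boot all_order all_algebra.
From mathcomp Require Import zify.
From Stdlib Require Import FunctionalExtensionality.
Set Implicit Arguments. Unset Strict Implicit. Unset Printing Implicit Defensive.
Import Order.TTheory GRing.Theory Num.Theory.

Arguments mbind : simpl never.
Arguments mfold : simpl never.

Section CostMonad.

Lemma mbind_val A B (m : M A) (f : A -> M B) : (mbind m f).1 = (f m.1).1.
Proof. by case: m => a c; rewrite /mbind; case: (f a). Qed.

Lemma mbind_cost A B (m : M A) (f : A -> M B) : (mbind m f).2 = m.2 + (f m.1).2.
Proof. by case: m => a c; rewrite /mbind; case: (f a). Qed.

Lemma leq_mbind_cost A B (m : M A) (f : A -> M B) a b :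
  m.2 <= a -> (f m.1).2 <= b -> (mbind m f).2 <= a + b.
Proof. by rewrite mbind_cost; apply: leq_add. Qed.

Lemma mfold_cons_val T S (f : T -> S -> M S) x xs s :
  (mfold f (x :: xs) s).1 = (mfold f xs (f x s).1).1.
Proof. exact: mbind_val. Qed.

Lemma mfold_cons_cost T S (f : T -> S -> M S) x xs s :
  (mfold f (x :: xs) s).2 = ((f x s).2 + (mfold f xs (f x s).1).2).+1.
Proof. by rewrite /= mbind_cost. Qed.

Lemma mfold_cost T S (f : T -> S -> M S) xs s b :
  (forall x s, (f x s).2 <= b) -> (mfold f xs s).2 <= size xs * b.+1.
Proof.
move=> fb; elim: xs s => [|x xs IHxs] s //.
by rewrite mfold_cons_cost mulSn -addSn leq_add ?ltnS.
Qed.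

Variables (n : nat) (S A : Type) (get : S -> 'I_n -> A).

Lemma mfold_upd (f : 'I_n -> S -> M S) (g : 'I_n -> A) l s :
  (forall x s, get (f x s).1 = upd (get s) x (g x)) ->
  forall t, get (mfold f l s).1 t = if t \in l then g t else get s t.
Proof.
move=> fg t; elim: l s => [|x l IHl] s //.
rewrite mfold_cons_val IHl fg /upd in_cons.
by case: (t \in l); case: eqP => // ->.
Qed.

Lemma mfold_upd_enum (f : 'I_n -> S -> M S) (g : 'I_n -> A) s :
  (forall x s, get (f x s).1 = upd (get s) x (g x)) ->
  get (mfold f (enum 'I_n) s).1 = g.
Proof.
by move=> fg; apply: functional_extensionality => t; rewrite (mfold_upd _ _ fg) mem_enum.
Qed.

End CostMonad.

Lemma init_arr_val n A (f : 'I_n -> A) : (init_arr f).1 = f.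
Proof. exact: mbind_val. Qed.

Lemma init_arr_cost n A (f : 'I_n -> A) : (init_arr f).2 <= n.
Proof.
rewrite /init_arr mbind_cost addn0.
by have := @mfold_cost _ _ (fun (_ : 'I_n) (u : unit) => mret u) (enum 'I_n) tt 0;
  rewrite size_enum_ord muln1; apply.
Qed.

Section Graph.
Variables (R : realDomainType) (n : nat) (w : 'I_n -> 'I_n -> option R).
Local Open Scope ring_scope.

Definition leo (x y : option R) : bool :=
  if y is Some b then (if x is Some a then a <= b else false) else true.

Lemma leo_refl x : leo x x.
Proof. by case: x => /=. Qed.

Lemma leo_trans x y z : leo x y -> leo y z -> leo x z.
Proof. by case: z => [c|] //; case: y => [b|] //; case: x => [a|] //=; apply: le_trans. Qed.

Lemma lt_opt_leo a x : lt_opt a x -> leo (Some a) x.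
Proof. by case: x => //= b /ltW. Qed.

Lemma leo_Nlt_opt a x : ~~ lt_opt a x -> leo x (Some a).
Proof. by case: x => //= b; rewrite -leNgt. Qed.

Section Relax.
Variables (C : 'I_n -> bool) (d : 'I_n -> option R) (v : 'I_n).

Definition relax_body u (acc : option R * option 'I_n) : M (option R * option 'I_n) :=
  mret (match d u, w u v with
        | Some a, Some b =>
            if ~~ C u && ~~ C v && lt_opt (a + b) acc.1
            then (Some (a + b), Some u) else acc
        | _, _ => acc end).

Definition parent_ok (acc : option R * option 'I_n) : Prop :=
  match acc.2 with
  | None => acc.1 = d v
  | Some u => exists a b, [/\ d u = Some a, w u v = Some b, ~~ C u, ~~ C v &
                            acc.1 = Some (a + b)]
  end.

Definition relaxed (l : seq 'I_n) (acc r : option R * option 'I_n) : Prop :=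
  [/\ parent_ok r, leo r.1 acc.1 &
      forall u a b, u \in l -> d u = Some a -> w u v = Some b -> ~~ C u -> ~~ C v ->
        leo r.1 (Some (a + b))].

Lemma relax_body_spec u acc : parent_ok acc -> relaxed [:: u] acc (relax_body u acc).1.
Proof.
move=> acc_ok; rewrite /relaxed /=.
case du: (d u) => [a|]; last by split=> [//||? ? ? /[!inE] /eqP->]; rewrite ?du ?leo_refl.
case wuv: (w u v) => [b|]; last by split=> [//||? ? ? /[!inE] /eqP-> ?]; rewrite ?wuv ?leo_refl.
case: ifP => [/andP[/andP[Cu Cv] lt_ab]|not_lt].
  split=> [|/=|? ? ? /[!inE] /eqP->]; [by exists a, b | exact: lt_opt_leo|].
  by rewrite du wuv => -[<-] [<-] _ _ /=; rewrite lexx.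
split=> //; first exact: leo_refl.
move=> ? ? ? /[!inE] /eqP->; rewrite du wuv => -[<-] [<-] Cu Cv.
apply: leo_Nlt_opt.
by rewrite Cu Cv /= in not_lt; rewrite not_lt.
Qed.

Lemma relax_fold l acc : parent_ok acc -> relaxed l acc (mfold relax_body l acc).1.
Proof.
elim: l acc => [|x l IHl] acc acc_ok; first by split=> //; apply: leo_refl.
rewrite mfold_cons_val.
have [ok_x le_x opt_x] := relax_body_spec x acc_ok.
have [ok_l le_l opt_l] := IHl _ ok_x.
split=> //; first exact: leo_trans le_l le_x.
move=> u a b; rewrite in_cons => /orP[/eqP-> | ul] du wuv Cu Cv.
  by apply: leo_trans le_l (opt_x x a b _ du wuv Cu Cv); rewrite inE.
exact: opt_l ul du wuv Cu Cv.
Qed.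

Lemma relax_spec : relaxed (enum 'I_n) (d v, None) (relax_v w C d v).1.
Proof. exact: relax_fold. Qed.

Lemma relax_cost : ((relax_v w C d v).2 <= n)%N.
Proof.
by have := @mfold_cost _ _ relax_body (enum 'I_n) (d v, None) 0;
  rewrite size_enum_ord muln1; apply.
Qed.

End Relax.

Lemma walk_ok_rcons x p y :
  walk_ok w x (rcons p y) = walk_ok w x p && (w (last x p) y != None).
Proof. by elim: p x => [|z p IHp] x /=; rewrite ?andbT ?IHp ?andbA. Qed.

Lemma pweight_rcons x p y :
  pweight w (x :: rcons p y) = pweight w (x :: p) + odflt 0 (w (last x p) y).
Proof.
rewrite /=; elim: p x => [|z p IHp] x /=; first by rewrite addr0 add0r.
by rewrite IHp addrA.
Qed.

Section HopPaths.
Variable A : {set 'I_n}.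

Lemma hpath1 k s t x : is_hpath w A k s t [:: x] = [&& x == s, x == t & x \in A].
Proof. by rewrite /is_hpath /= !andbT. Qed.

Lemma hpath_size k s t q : is_hpath w A k s t q -> (size q <= k.+1)%N.
Proof. by case: q => // x p /and5P[]. Qed.

Lemma hpath_end k s t q : is_hpath w A k s t q -> t \in A.
Proof.
case: q => // x p /and5P[_ /eqP<- /allP qA _ _].
by apply: qA; apply: mem_last.
Qed.

Lemma hpath_mono k k' s t q :
  (k <= k')%N -> is_hpath w A k s t q -> is_hpath w A k' s t q.
Proof.
move=> le_kk'; case: q => // x p /= /and5P[-> -> -> -> le_pk].
exact: leq_trans le_kk'.
Qed.

Lemma hpath_rcons k s u v q :
  is_hpath w A k s u q -> v \in A -> w u v != None ->
  is_hpath w A k.+1 s v (rcons q v).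
Proof.
case: q => // x p /and5P[xs /eqP end_u qA wp le_pk] vA wuv /=.
rewrite xs last_rcons eqxx size_rcons ltnS le_pk walk_ok_rcons wp end_u wuv.
by move: qA; rewrite /= all_rcons vA => /andP[-> ->].
Qed.

Lemma hpath_rconsP k s v x p y :
  is_hpath w A k.+1 s v (x :: rcons p y) ->
  [/\ y = v, is_hpath w A k s (last x p) (x :: p), v \in A & w (last x p) v != None].
Proof.
rewrite /is_hpath last_rcons walk_ok_rcons size_rcons ltnS /= all_rcons.
case/and5P=> -> /eqP-> /and3P[xA vA pA] /andP[-> wv] ->.
by split; rewrite ?eqxx ?xA ?pA.
Qed.

End HopPaths.

Section BellmanFord.
Variables (C : 'I_n -> bool) (s : 'I_n).

Let live : {set 'I_n} := ~: [set v | C v].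

Lemma mem_live v : (v \in live) = ~~ C v.
Proof. by rewrite !inE. Qed.

Definition bf_init (v : 'I_n) : option R := if (v == s) && ~~ C s then Some 0 else None.

Fixpoint bf_dist r : 'I_n -> option R :=
  if r is r'.+1 then fun v => (relax_v w C (bf_dist r') v).1.1 else bf_init.

Definition bf_parent r : 'I_n -> option 'I_n :=
  if r is r'.+1 then fun v => (relax_v w C (bf_dist r') v).1.2 else fun _ => None.

Lemma bf_dist_opt r q v :
  is_hpath w live r s v q -> leo (bf_dist r v) (Some (pweight w q)).
Proof.
elim: r q v => [|r IHr] [|x p] v //; case/lastP: p => [|p y].
- by rewrite hpath1 => /and3P[/eqP-> /eqP<-]; rewrite mem_live /= /bf_init eqxx => -> /=.
- by case/and5P; rewrite size_rcons.
- move=> hq; have [_ le_prev _] := relax_spec C (bf_dist r) v.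
  by apply: leo_trans le_prev (IHr _ _ _); move: hq; rewrite !hpath1.
case/hpath_rconsP=> -> hp vA; set u := last x p.
case wuv: (w u v) => [b|] // _.
have := IHr _ _ hp; case du: (bf_dist r u) => [a|] // le_a.
have [_ _ opt] := relax_spec C (bf_dist r) v.
have Cu : ~~ C u by rewrite -mem_live (hpath_end hp).
apply: leo_trans (opt u a b _ du wuv Cu _) _; rewrite ?mem_enum -?mem_live //.
by rewrite pweight_rcons -/u wuv /= lerD2r.
Qed.

Lemma recon_sound par k : (forall r, (0 < r <= k)%N -> par r = bf_parent r) ->
  forall r, (r <= k)%N -> forall v x acc, bf_dist r v = Some x ->
  exists q, [/\ (recon par r v (v :: acc)).1 = q ++ acc,
                is_hpath w live r s v q & pweight w q = x].
Proof.
move=> par_ok; elim=> [|r IHr] le_rk v x acc.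
  rewrite /= /bf_init; case: ifP => // /andP[/eqP-> Cs] [<-].
  by exists [:: s]; rewrite hpath1 mem_live Cs !eqxx.
rewrite /= (par_ok r.+1) ?le_rk //=.
have [ok _ _] := relax_spec C (bf_dist r) v; move: ok; rewrite /parent_ok.
case: (relax_v w C (bf_dist r) v).1 => [xv [u|]] /= => [|-> dv].
  move=> [a [b [du wuv Cu Cv ->]]] [<-].
  have [q [-> hq <-]] := IHr (ltnW le_rk) u a (v :: acc) du.
  exists (rcons q v); rewrite cat_rcons; split=> //.
    by apply: hpath_rcons hq _ _; rewrite ?mem_live ?wuv.
  by case: q hq => // y q /and5P[_ /eqP end_u _ _ _]; rewrite rcons_cons pweight_rcons end_u wuv.
have [q [-> hq <-]] := IHr (ltnW le_rk) v x acc dv.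
by exists q; split=> //; apply: hpath_mono hq.
Qed.

Lemma bf_round_val d : (bf_round w C d).1 =
  (fun v => (relax_v w C d v).1.1, fun v => (relax_v w C d v).1.2).
Proof.
by apply: injective_projections; apply: mfold_upd_enum => v acc; rewrite mbind_val.
Qed.

Lemma bf_round_cost d : ((bf_round w C d).2 <= n * n.+1)%N.
Proof.
rewrite -[n in (n * _)%N]size_enum_ord; apply: mfold_cost => v acc.
by rewrite mbind_cost addn0; apply: relax_cost.
Qed.

Definition bf_body r (acc : ('I_n -> option R) * (nat -> 'I_n -> option 'I_n)) :=
  mbind (bf_round w C acc.1) (fun res =>
    mret (res.1, fun r' => if r' == r then res.2 else acc.2 r')).

Definition bf_layers_ok j (acc : ('I_n -> option R) * (nat -> 'I_n -> option 'I_n)) :=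
  acc.1 = bf_dist j /\ forall r, (0 < r <= j)%N -> acc.2 r = bf_parent r.

Lemma bf_fold m j acc :
  bf_layers_ok j acc -> bf_layers_ok (j + m) (mfold bf_body (iota j.+1 m) acc).1.
Proof.
elim: m j acc => [|m IHm] j acc; first by rewrite addn0.
move=> [dj pj]; rewrite mfold_cons_val -addSnnS; apply: IHm.
rewrite /bf_body mbind_val bf_round_val /= dj; split=> // r le_r.
by rewrite /=; case: eqP => [->|ne_r] //; apply: pj; lia.
Qed.

Lemma bf_val k : bf_layers_ok k (bf w C s k).1.
Proof.
rewrite /bf mbind_val init_arr_val -[k]add0n.
by apply: bf_fold; split=> // r; lia.
Qed.

Lemma bf_paths_spec k t : shortest_hpath w live k s t ((bf_paths w C s k).1 t).
Proof.
rewrite /bf_paths mbind_val.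
have [dk pk] := bf_val k; set res := (bf w C s k).1 in dk pk *.
rewrite (@mfold_upd _ _ _ id _ (fun t => if res.1 t is Some _ then
     Some (recon res.2 k t [:: t]).1 else None)) ?mem_enum; last first.
  by move=> x P; case: (res.1 x) => [a|] //; rewrite mbind_val.
rewrite dk; case dt: (bf_dist k t) => [x|] /=; last first.
  by move=> q; apply/negP => /bf_dist_opt; rewrite dt.
have [q [-> hq wq]] := recon_sound pk (leqnn k) [::] dt.
rewrite cats0; split=> // q' /bf_dist_opt; by rewrite dt wq.
Qed.

End BellmanFord.

Lemma recon_cost (par : nat -> 'I_n -> option 'I_n) r v acc :
  (recon par r v acc).2 = r.
Proof. by elim: r v acc => [|r IHr] v acc //=; case: (par r.+1 v) => [u|]; rewrite IHr. Qed.

Lemma bf_cost C s k : ((bf w C s k).2 <= n + k * (n * n.+1).+1)%N.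
Proof.
rewrite /bf mbind_cost; apply: leq_add; first exact: init_arr_cost.
rewrite -[k in (k * _)%N](size_iota 1); apply: mfold_cost => r acc.
by rewrite mbind_cost addn0; apply: bf_round_cost.
Qed.

Lemma bf_paths_cost C s k :
  ((bf_paths w C s k).2 <= n + k * (n * n.+1).+1 + n * k.+1)%N.
Proof.
rewrite /bf_paths mbind_cost; apply: leq_add; first exact: bf_cost.
rewrite -[n in (n * _)%N]size_enum_ord; apply: mfold_cost => t P.
by case: ((bf w C s k).1.1 t) => [a|] //; rewrite mbind_cost recon_cost addn0.
Qed.
End Graph.

Section Congestion.
Variables (n inc : nat) (P : 'I_n -> option (seq 'I_n)).

Definition stamp_body (t u : 'I_n) (acc : ('I_n -> nat) * ('I_n -> option 'I_n)) :=
  if acc.2 u == Some t then mret acc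
  else mret (upd acc.1 u (acc.1 u + inc), upd acc.2 u (Some t)).

Definition path_body t (acc : ('I_n -> nat) * ('I_n -> option 'I_n)) :=
  if P t is Some q then mfold (stamp_body t) q acc else mret acc.

Definition on_path u t : bool := if P t is Some q then u \in q else false.

(* [m] lists the vertices already stamped with [t]: only the first visit of a
   vertex of [q] increases its congestion. *)
Lemma stamp_fold t q acc (m : seq 'I_n) :
  (forall u, (acc.2 u == Some t) = (u \in m)) ->
  (forall u, (mfold (stamp_body t) q acc).1.1 u =
             acc.1 u + inc * ((u \in q) && (u \notin m))) /\
  (forall u t', (mfold (stamp_body t) q acc).1.2 u = Some t' ->
                t' = t \/ acc.2 u = Some t').
Proof.
elim: q acc m => [|x q IHq] acc m stamped.
  by split=> [u|u t' ->]; [rewrite muln0 addn0 | right].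
rewrite mfold_cons_val /stamp_body; case: ifP => [xt|xNt].
  have [fold1 fold2] := IHq acc m stamped; split=> // u.
  rewrite fold1 in_cons; case: (eqVneq u x) => [->|//].
  by rewrite -stamped xt andbF.
set acc' := (_, _).
have stamped' u : (acc'.2 u == Some t) = (u \in x :: m).
  by rewrite /acc' /upd /= in_cons -stamped; case: (eqVneq u x) => [->|]; rewrite ?eqxx.
have [fold1 fold2] := IHq acc' (x :: m) stamped'; split.
  move=> u; rewrite fold1 /acc' /upd /= !in_cons.
  case: (eqVneq u x) => [->|//]; rewrite -stamped xNt /= andbF; lia.
move=> u t' /fold2[->|]; first by left.
by rewrite /acc' /upd /=; case: (eqVneq u x) => [_ [->]|_ ->]; [left|right].
Qed.

Lemma path_fold l acc (done : seq 'I_n) : uniq (done ++ l) ->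
  (forall u t', acc.2 u = Some t' -> t' \in done) ->
  forall u, (mfold path_body l acc).1.1 u = acc.1 u + inc * count (on_path u) l.
Proof.
elim: l acc done => [|x l IHl] acc done uniq_l stamps u.
  by rewrite /= muln0 addn0.
rewrite mfold_cons_val.
have uniq_l' : uniq (rcons done x ++ l) by rewrite cat_rcons.
have xNdone : x \notin done.
  by move: uniq_l; rewrite cat_uniq /= => /and3P[_ /norP[]].
rewrite /path_body /on_path; case Px: (P x) => [q|]; last first.
  rewrite (IHl _ (rcons done x)) //= ?Px // => v t' /stamps.
  by rewrite mem_rcons inE => ->; rewrite orbT.
have fresh v : (acc.2 v == Some x) = (v \in [::]).
  by apply/negP => /eqP/stamps xdone; rewrite xdone in xNdone.
have [fold1 fold2] := stamp_fold q fresh.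
rewrite (IHl _ (rcons done x)) //= ?fold1 ?Px ?andbT ?mulnDr ?addnA //.
by move=> v t' /fold2[->|/stamps]; rewrite mem_rcons inE ?eqxx // => ->; rewrite orbT.
Qed.

Lemma cong_update_val cong :
  (cong_update inc P cong).1 = fun u =>
    cong u + inc * #|[set t | if P t is Some q then u \in q else false]|.
Proof.
rewrite /cong_update !mbind_val.
apply: functional_extensionality => u.
rewrite cardsE cardE size_filter enumT.
by apply: (path_fold (done := [::])); rewrite // cat0s -enumT enum_uniq.
Qed.

Lemma cong_update_cost cong K : (forall t q, P t = Some q -> size q <= K) ->
  (cong_update inc P cong).2 <= n + n * K.+1.
Proof.
move=> size_P; rewrite /cong_update mbind_cost; apply: leq_add; first exact: init_arr_cost.
rewrite mbind_cost addn0 -[n in n * _]size_enum_ord; apply: mfold_cost => t acc.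
rewrite /path_body; case Pt: (P t) => [q|] //.
apply: leq_trans (size_P t q Pt); rewrite -[size q]muln1.
by apply: mfold_cost => x a; rewrite /stamp_body; case: ifP.
Qed.

End Congestion.

Lemma C_update_val n tau (cong : 'I_n -> nat) :
  (C_update tau cong).1 = fun v => tau < 2 * cong v.
Proof. by apply: (mfold_upd_enum (get := id)). Qed.

Lemma C_update_cost n tau (cong : 'I_n -> nat) : (C_update tau cong).2 <= n.
Proof. by rewrite -[n in _ <= n]muln1 -[n in n * _]size_enum_ord; apply: mfold_cost. Qed.

Lemma bf_paths_size (R : realDomainType) n (w : 'I_n -> 'I_n -> option R) C s k t q :
  (bf_paths w C s k).1 t = Some q -> size q <= k.+1.
Proof. by move=> Pt; have := bf_paths_spec w C s k t; rewrite Pt => -[/hpath_size]. Qed.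

Lemma dp_run_cat (R : realDomainType) n (w : 'I_n -> 'I_n -> option R) tau st1 l1 st2 l2 st3 :
  dp_run w tau st1 l1 st2 -> dp_run w tau st2 l2 st3 -> dp_run w tau st1 (l1 ++ l2) st3.
Proof. by elim=> [//|st s i P rest st' HP _ IH] /IH; apply: dp_run_cons. Qed.

Arguments bf_paths : simpl never.
Arguments cong_update : simpl never.
Arguments C_update : simpl never.

Section Process.
Variables (R : realDomainType) (n : nat) (w : 'I_n -> 'I_n -> option R) (tau : nat).
Hypothesis n_gt0 : 0 < n.

Lemma process_val s i st :
  impl_outcome (process w tau s i (2 ^ i) (3 ^ i) st).1 =
  dp_step tau (impl_outcome st) s i (bf_paths w st.1.1 s (hop i)).1.
Proof.
case: st => [[C cong] pi]; rewrite /process 3!mbind_val /=.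
rewrite cong_update_val C_update_val /dp_step /=; congr DPState.
do 3!apply: functional_extensionality => ?; by case: ifP.
Qed.

Lemma process_paths_shortest s i st t :
  shortest_hpath w (~: dpC (impl_outcome st)) (hop i) s t
    ((bf_paths w st.1.1 s (hop i)).1 t).
Proof. by case: st => [[C cong] pi]; apply: bf_paths_spec. Qed.

Lemma process_cost s i p2 p3 st :
  (process w tau s i p2 p3 st).2 <= 10 * n ^ 2 * (p3 %/ p2).+1.
Proof.
case: st => [[C cong] pi]; rewrite /process; set k := p3 %/ p2.
apply: leq_trans (_ : _ <= (n + k * (n * n.+1).+1 + n * k.+1) +
                           ((n + n * k.+2) + (n + 0)))%N _.
  apply: leq_mbind_cost (bf_paths_cost w C s k) _.
  apply: leq_mbind_cost (cong_update_cost _ _ (@bf_paths_size _ _ w C s k)) _.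
  exact: leq_mbind_cost (C_update_cost _ _) _.
rewrite expnS expn1; nia.
Qed.

Definition root_body (s : 'I_n) i (acc : impl_state n * nat * nat) :=
  let: (st, p2, p3) := acc in
  mbind (process w tau s i p2 p3 st) (fun st' => mret (st', p2 * 2, p3 * 3)).

Lemma root_body_val s i st : (root_body s i (st, 2 ^ i, 3 ^ i)).1 =
  ((process w tau s i (2 ^ i) (3 ^ i) st).1, 2 ^ i.+1, 3 ^ i.+1).
Proof. by rewrite /root_body mbind_val !expnSr. Qed.

Lemma root_fold_run s m j st :
  dp_run w tau (impl_outcome st) [seq (s, i) | i <- iota j m]
    (impl_outcome (mfold (root_body s) (iota j m) (st, 2 ^ j, 3 ^ j)).1.1.1).
Proof.
elim: m j st => [|m IHm] j st; first exact: dp_run_nil.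
rewrite mfold_cons_val root_body_val.
apply: dp_run_cons (process_paths_shortest s j st) _.
by rewrite -process_val; apply: IHm.
Qed.

Lemma root_fold_cost s m j st :
  (mfold (root_body s) (iota j m) (st, 2 ^ j, 3 ^ j)).2 <=
    \sum_(i <- iota j m) (10 * n ^ 2 * (hop i).+1).+1.
Proof.
elim: m j st => [|m IHm] j st; first by rewrite big_nil.
rewrite mfold_cons_cost big_cons root_body_val ltnS leq_add ?IHm //.
by rewrite /root_body mbind_cost addn0 process_cost.
Qed.

Lemma process_root_run ihv s st :
  dp_run w tau (impl_outcome st) [seq (s, i) | i <- iota 0 ihv.+1]
    (impl_outcome (process_root w tau ihv s st).1).
Proof. by rewrite /process_root mbind_val; apply: root_fold_run. Qed.

Lemma process_root_cost ihv s st :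
  (process_root w tau ihv s st).2 <= \sum_(i <- iota 0 ihv.+1) (10 * n ^ 2 * (hop i).+1).+1.
Proof. by rewrite /process_root mbind_cost addn0; apply: root_fold_cost. Qed.

Lemma process_roots_run ihv ord st :
  dp_run w tau (impl_outcome st) [seq (s, i) | s <- ord, i <- iota 0 ihv.+1]
    (impl_outcome (mfold (process_root w tau ihv) ord st).1).
Proof.
elim: ord st => [|s ord IHord] st; first exact: dp_run_nil.
by rewrite allpairs_cons mfold_cons_val; apply: dp_run_cat (process_root_run _ _ _) (IHord _).
Qed.

End Process.

Lemma leq_mul_exp2_exp3 h : h * 2 ^ h <= 3 ^ h.
Proof.
elim: h => [|h IHh] //; case: h IHh => [|[|h]] IHh //.
rewrite (expnS 2 h.+2) (expnS 3 h.+2); nia.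
Qed.

(* [hop i * 2 ^ i <= 3 ^ i], so the sum is dominated by a geometric series of ratio 3/2 *)
Lemma sum_hop_geometric m : (\sum_(i <- iota 0 m.+1) hop i) * 2 ^ m <= 3 ^ m.+1.
Proof.
elim: m => [|m IHm]; first by rewrite big_cons big_nil.
rewrite -addn1 iotaD big_cat add0n addn1 big_seq1.
have hop_m : hop m.+1 * 2 ^ m.+1 <= 3 ^ m.+1 by apply: leq_divM.
move: IHm hop_m; rewrite (expnS 2 m) (expnS 3 m.+1) (expnS 3 m).
move: (\sum_(i <- _) _) (hop _) (2 ^ m) (3 ^ m) => S x p2 p3 IHm hop_m.
change ((S + x) * (2 * p2) <= 3 * (3 * p3)); nia.
Qed.

Lemma has_ih h : has (fun i => h * 2 ^ i <= 3 ^ i) (iota 0 h.+1).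
Proof. by apply/hasP; exists h; [rewrite mem_iota; lia | apply: leq_mul_exp2_exp3]. Qed.

Lemma ih_le h : ih h <= h.
Proof. by have := has_ih h; rewrite has_find size_iota ltnS. Qed.

Lemma ih_minimal h m : ih h = m.+1 -> 3 ^ m < h * 2 ^ m.
Proof.
move=> ih_m; have lt_m : m < ih h by rewrite ih_m.
have := before_find 0 lt_m; rewrite nth_iota ?add0n => [/negbT|]; first by rewrite ltnNge.
by have := ih_le h; lia.
Qed.

Lemma sum_hop_ih h : 0 < h -> \sum_(i <- iota 0 (ih h).+1) hop i <= 5 * h.
Proof.
move=> h_gt0; case ih_m: (ih h) => [|m]; first by rewrite big_seq1 /hop; lia.
have := sum_hop_geometric m.+1; have := ih_minimal ih_m.
rewrite (expnS 2 m) (expnS 3 m.+1) (expnS 3 m).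
have p2_gt0 : 0 < 2 ^ m by rewrite expn_gt0.
move: p2_gt0 (\sum_(i <- _) _) (2 ^ m) (3 ^ m) => + S p2 p3; nia.
Qed.

Lemma sum_root_cost n h : 0 < n -> 0 < h ->
  \sum_(i <- iota 0 (ih h).+1) (10 * n ^ 2 * (hop i).+1).+1 <= 77 * (n ^ 2 * h).
Proof.
move=> n_gt0 h_gt0; have n2_gt0 : 0 < n ^ 2 by rewrite expn_gt0 n_gt0.
apply: (@leq_trans (\sum_(i <- iota 0 (ih h).+1) 11 * n ^ 2 * (hop i + 1))).
  by apply: leq_sum => i _; nia.
rewrite -big_distrr big_split sum1_size size_iota.
change (11 * n ^ 2 * (\sum_(i <- iota 0 (ih h).+1) hop i + (ih h).+1) <= 77 * (n ^ 2 * h)).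
have := sum_hop_ih h_gt0; have := ih_le h.
set S := \sum_(i <- _) hop i; clearbody S; move: (ih h) (n ^ 2) => I a; nia.
Qed.

Lemma find_ih_val h fuel i : h * 2 ^ (i + fuel) <= 3 ^ (i + fuel) ->
  (find_ih h fuel i (2 ^ i) (3 ^ i)).1 =
  i + find (fun i => h * 2 ^ i <= 3 ^ i) (iota i fuel.+1).
Proof.
elim: fuel i => [|f IHf] i /=; first by rewrite addn0 => ->; rewrite addn0.
case: ifP => [_ _|_]; first by rewrite addn0.
by rewrite -addSnnS => le_f; rewrite -!expnSr IHf // addSnnS.
Qed.

Lemma find_ih_ih h : (find_ih h h 0 1 1).1 = ih h.
Proof. by rewrite (find_ih_val (i := 0)) add0n ?leq_mul_exp2_exp3. Qed.

Lemma find_ih_cost h fuel i p2 p3 : (find_ih h fuel i p2 p3).2 <= fuel.+1.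
Proof. by elim: fuel i p2 p3 => [|f IHf] i p2 p3 /=; case: ifP => // _; rewrite ltnS IHf. Qed.

Lemma init_pi_cost n m :
  (mfold (fun (_ : 'I_n) u => mfold (fun (_ : nat) u' =>
     mfold (fun (_ : 'I_n) u'' => mret u'') (enum 'I_n) u') (iota 0 m) u)
   (enum 'I_n) tt).2 <= n * (m * n.+1).+1.
Proof.
rewrite -[n in n * _]size_enum_ord; apply: mfold_cost => _ u.
rewrite -[m in m * _](size_iota 0); apply: mfold_cost => _ u'.
by rewrite -[n in _ <= n]muln1 -[n in n * _]size_enum_ord; apply: mfold_cost.
Qed.

Lemma DetPre_impl_run (R : realDomainType) n (w : 'I_n -> 'I_n -> option R) tau h :
  DetPreprocessing_outcome w tau h (impl_outcome (DetPre_impl w tau h).1).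
Proof.
exists (enum 'I_n); split=> //.
rewrite /DetPre_impl 4!mbind_val find_ih_ih !init_arr_val.
have -> : dp_init n = impl_outcome (fun _ => false, fun _ => 0, fun _ _ _ => None).
  by congr DPState; apply/setP => v; rewrite !inE.
exact: process_roots_run.
Qed.

Lemma DetPre_impl_cost (R : realDomainType) n (w : 'I_n -> 'I_n -> option R) tau h :
  0 < n -> 0 < h -> (DetPre_impl w tau h).2 <= 100 * (n ^ 3 * h).
Proof.
move=> n_gt0 h_gt0; set I := ih h.
apply: (@leq_trans (h.+1 + (n + (n + (n * (I.+1 * n.+1).+1 +
                                       n * (77 * (n ^ 2 * h)).+1))))).
  apply: leq_mbind_cost (find_ih_cost h h 0 1 1) _; rewrite find_ih_ih -/I.
  apply: leq_mbind_cost (init_arr_cost _) _.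
  apply: leq_mbind_cost (init_arr_cost _) _.
  apply: leq_mbind_cost (init_pi_cost _ _) _.
  rewrite -[n in n * _]size_enum_ord; apply: mfold_cost => s st.
  exact: leq_trans (process_root_cost _ _ _ _ _ _) (sum_root_cost n_gt0 h_gt0).
have init_pi : n * (I.+1 * n.+1).+1 <= 5 * (n ^ 2 * h).
  have : I.+1 * n.+1 <= (2 * h) * (2 * n) by apply: leq_mul; have := ih_le h; lia.
  rewrite expnS expn1; nia.
have n2h_le : n ^ 2 * h <= n ^ 3 * h by rewrite leq_mul2r leq_pexp2l ?orbT.
have roots : n * (77 * (n ^ 2 * h)).+1 <= 78 * (n ^ 3 * h) by rewrite (expnS n 2); nia.
have n_le : n <= n ^ 3 * h.
  by rewrite -{1}(muln1 n) expnS -mulnA leq_mul2l muln_gt0 expn_gt0 n_gt0 h_gt0 orbT.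
have h_le : h <= n ^ 3 * h by rewrite leq_pmull // expn_gt0 n_gt0.
lia.
Qed.

Theorem lemma3p3 :
  exists c : nat,
  forall (R : realDomainType) (n : nat) (w : 'I_n -> 'I_n -> option R)
         (tau h : nat),
    0 < n -> 0 < h -> 2 * n ^ 2 <= tau ->
    DetPreprocessing_outcome w tau h (impl_outcome (DetPre_impl w tau h).1) /\
    (DetPre_impl w tau h).2 <= c * (n ^ 3 * h).
Proof.
exists 100 => R n w tau h n_gt0 h_gt0 _.
by split; [apply: DetPre_impl_run | apply: DetPre_impl_cost].
Qed.
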